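(* Let $\rho$ be a monic PBPO rule in a category. Then ${\Rightarrow_\rho} = {\Rightarrow^{\rightarrowtail}_\rho}$ and ${\Rightarrow^{\mathrm{SM}}_\rho} = {\Rightarrow^{\mathrm{PBPO}^{+}}_\rho}$, where in the latter $\rho$ is regarded as a PBPO$^{+}$ rule by forgetting $t_R$, $r'$ and $R'$.
   Context: A PBPO rule consists of morphisms $l : K \to L$, $r : K \to R$, $t_L : L \to L'$, $t_K : K \to K'$, $t_R : R \to R'$, $l' : K' \to L'$, $r' : K' \to R'$ with $t_L \circ l = l' \circ t_K$ and $t_R \circ r = r' \circ t_K$; it is canonical if $(l,t_K)$ is a pullback of $(t_L,l')$ and $(r',t_R)$ a pushout of $(t_K,r)$, and monic if canonical with $t_L$ mono. A PBPO step $G_L \Rightarrow_\rho^{m,\alpha} G_R$: $m : L \to G_L$, $\alpha : G_L \to L'$ with $t_L = \alpha \circ m$; a pullback $G_L \xleftarrow{g_L} G_K \xrightarrow{u'} K'$ of $\alpha,l'$; the unique $u : K \to G_K$ with $g_L \circ u = m \circ l$ and $u' \circ u = t_K$; a pushout $G_K \xrightarrow{g_R} G_R \xleftarrow{w} R$ of $u,r$. ${\Rightarrow_\rho}$ relates $G_L,G_R$ if such a step exists for some $m,\alpha$; ${\Rightarrow^{\rightarrowtail}_\rho}$ requires $m$ monic; ${\Rightarrow^{\mathrm{SM}}_\rho}$ requires that $L \xleftarrow{1_L} L \xrightarrow{m} G_L$ is a pullback of $t_L$ and $\alpha$. A PBPO$^{+}$ rule consists of $l : K \to L$, $r : K \to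 R$, monos $t_L, t_K$ and $l' : K' \to L'$ with $(l,t_K)$ a pullback of $(t_L,l')$. A PBPO$^{+}$ step $G_L \Rightarrow^{\mathrm{PBPO}^{+}}_\rho G_R$ holds if there is $\alpha : G_L \to L'$ and $m : L \to G_L$ such that $L \xleftarrow{1_L} L \xrightarrow{m} G_L$ is a pullback of $t_L,\alpha$; a pullback $G_L \xleftarrow{g_L} G_K \xrightarrow{u'} K'$ of $\alpha,l'$; the unique $u : K \to G_K$ with $t_K = u' \circ u$; and a pushout $G_K \xrightarrow{g_R} G_R \xleftarrow{w} R$ of $u$ and $r$. *)

Set Implicit Arguments.
Unset Strict Implicit.

Record Category := {
  Obj :> Type;
  Hom : Obj -> Obj -> Type;
  idm : forall A : Obj, Hom A A;
  comp : forall A B C : Obj, Hom B C -> Hom A B -> Hom A C;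
  comp_assoc : forall A B C D (h : Hom C D) (g : Hom B C) (f : Hom A B),
      comp h (comp g f) = comp (comp h g) f;
  comp_id_l : forall A B (f : Hom A B), comp (idm B) f = f;
  comp_id_r : forall A B (f : Hom A B), comp f (idm A) = f
}.

Arguments Hom {c} _ _.
Arguments idm {c} _.
Arguments comp {c A B C} _ _.

Notation "g \o f" := (comp g f) (at level 40, left associativity).

Unset Implicit Arguments.
Section CatDefs.
Variable C : Category.

Definition mono {X Y : C} (f : Hom X Y) : Prop :=
  forall (Z : C) (g h : Hom Z X), f \o g = f \o h -> g = h.

Definition is_pullback {A B D P : C} (f : Hom A D) (g : Hom B D)
    (p1 : Hom P A) (p2 : Hom P B) : Prop :=
  f \o p1 = g \o p2 /\
  forall (Q : C) (q1 : Hom Q A) (q2 : Hom Q B), f \o q1 = g \o q2 ->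
    exists u : Hom Q P, (p1 \o u = q1 /\ p2 \o u = q2) /\
      forall v : Hom Q P, p1 \o v = q1 -> p2 \o v = q2 -> v = u.

Definition is_pushout {A B D P : C} (f : Hom A B) (g : Hom A D)
    (i1 : Hom B P) (i2 : Hom D P) : Prop :=
  i1 \o f = i2 \o g /\
  forall (Q : C) (q1 : Hom B Q) (q2 : Hom D Q), q1 \o f = q2 \o g ->
    exists u : Hom P Q, (u \o i1 = q1 /\ u \o i2 = q2) /\
      forall v : Hom P Q, v \o i1 = q1 -> v \o i2 = q2 -> v = u.

Record PBPO_rule := {
  rL : C; rK : C; rR : C; rL' : C; rK' : C; rR' : C;
  r_l : Hom rK rL;
  r_r : Hom rK rR;
  r_tL : Hom rL rL';
  r_tK : Hom rK rK';
  r_tR : Hom rR rR';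
  r_l' : Hom rK' rL';
  r_r' : Hom rK' rR';
  r_commL : r_tL \o r_l = r_l' \o r_tK;
  r_commR : r_tR \o r_r = r_r' \o r_tK
}.

Arguments r_l _ : clear implicits.
Arguments r_r _ : clear implicits.
Arguments r_tL _ : clear implicits.
Arguments r_tK _ : clear implicits.
Arguments r_tR _ : clear implicits.
Arguments r_l' _ : clear implicits.
Arguments r_r' _ : clear implicits.

Definition canonical_rule (rho : PBPO_rule) : Prop :=
  is_pullback (r_tL rho) (r_l' rho) (r_l rho) (r_tK rho) /\
  is_pushout (r_tK rho) (r_r rho) (r_r' rho) (r_tR rho).

Definition monic_rule (rho : PBPO_rule) : Prop :=
  canonical_rule rho /\ mono (r_tL rho).

Definition PBPO_step_with (rho : PBPO_rule) (GL GR : C)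
    (m : Hom (rL rho) GL) (alpha : Hom GL (rL' rho)) : Prop :=
  r_tL rho = alpha \o m /\
  exists (GK : C) (gL : Hom GK GL) (u' : Hom GK (rK' rho)),
    is_pullback alpha (r_l' rho) gL u' /\
    exists u : Hom (rK rho) GK,
      gL \o u = m \o r_l rho /\ u' \o u = r_tK rho /\
      exists (gR : Hom GK GR) (w : Hom (rR rho) GR),
        is_pushout u (r_r rho) gR w.

Definition PBPO_step (rho : PBPO_rule) (GL GR : C) : Prop :=
  exists m alpha, PBPO_step_with rho GL GR m alpha.

Definition PBPO_step_mono (rho : PBPO_rule) (GL GR : C) : Prop :=
  exists m alpha, mono m /\ PBPO_step_with rho GL GR m alpha.

Definition PBPO_step_SM (rho : PBPO_rule) (GL GR : C) : Prop :=
  exists m alpha, is_pullback (r_tL rho) alpha (idm (rL rho)) m /\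
    PBPO_step_with rho GL GR m alpha.

Definition PBPOplus_step {L K R L' K' : C}
    (l : Hom K L) (r : Hom K R) (tL : Hom L L') (tK : Hom K K')
    (l' : Hom K' L') (GL GR : C) : Prop :=
  exists (alpha : Hom GL L') (m : Hom L GL),
    is_pullback tL alpha (idm L) m /\
    exists (GK : C) (gL : Hom GK GL) (u' : Hom GK K'),
      is_pullback alpha l' gL u' /\
      exists u : Hom K GK,
        tK = u' \o u /\
        exists (gR : Hom GK GR) (w : Hom R GR),
          is_pushout u r gR w.

Definition PBPOplus_step_of (rho : PBPO_rule) (GL GR : C) : Prop :=
  PBPOplus_step (r_l rho) (r_r rho) (r_tL rho) (r_tK rho) (r_l' rho) GL GR.

End CatDefs.

Arguments mono {C X Y} _.
Arguments monic_rule {C} _.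
Arguments PBPO_step {C} _ _ _.
Arguments PBPO_step_mono {C} _ _ _.
Arguments PBPO_step_SM {C} _ _ _.
Arguments PBPOplus_step_of {C} _ _ _.


(* If [t_L = alpha m] with [t_L] monic, then
   the match [m] is monic.  For the second equality, the only difference between
   the two step relations is the equation [g_L u = m l]; it is implied by the
   pullback condition on [m], since [alpha (g_L u) = l' t_K = t_L l] and every
   map [x] with [alpha x = t_L y] factors as [m y]. *)

Section Pullbacks.
Context {C : Category}.

Lemma mono_of_comp {X Y Z : C} {f : Hom X Y} {g : Hom Y Z} :
  mono (g \o f) -> mono f.
Proof.
  intros Hgf W a b E.
  apply Hgf.
  rewrite <- !comp_assoc, E.
  reflexivity.
Qed.

Lemma pullback_idm_comm {A B D : C} {f : Hom A D} {g : Hom B D} {m : Hom A B} :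
  is_pullback C f g (idm A) m -> f = g \o m.
Proof.
  intros [E _].
  rewrite comp_id_r in E.
  exact E.
Qed.

Lemma pullback_idm_factor {A B D X : C} {f : Hom A D} {g : Hom B D}
    {m : Hom A B} {x : Hom X B} {y : Hom X A} :
  is_pullback C f g (idm A) m -> g \o x = f \o y -> x = m \o y.
Proof.
  intros [_ Hu] Exy.
  destruct (Hu X y x (eq_sym Exy)) as [v [[Ev Emv] _]].
  rewrite comp_id_l in Ev.
  subst v.
  symmetry.
  exact Emv.
Qed.

End Pullbacks.

Section Steps.
Variable C : Category.
Variable rho : PBPO_rule C.

Lemma PBPO_step_with_match_mono {GL GR : C} {m alpha} :
  mono (r_tL C rho) -> PBPO_step_with C rho GL GR m alpha -> mono m.
Proof.
  intros HtL [Et _].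
  rewrite Et in HtL.
  exact (mono_of_comp HtL).
Qed.

Lemma PBPO_step_monoE (GL GR : C) :
  mono (r_tL C rho) -> (PBPO_step rho GL GR <-> PBPO_step_mono rho GL GR).
Proof.
  intros HtL.
  split.
  - intros [m [alpha Hstep]].
    exists m, alpha.
    split; [exact (PBPO_step_with_match_mono HtL Hstep) | exact Hstep].
  - intros [m [alpha [_ Hstep]]].
    exists m, alpha.
    exact Hstep.
Qed.

Lemma PBPO_step_SM_plus (GL GR : C) :
  PBPO_step_SM rho GL GR -> PBPOplus_step_of rho GL GR.
Proof.
  intros [m [alpha [Hm [_ [GK [gL [u' [HGK [u [_ [Eu Hpo]]]]]]]]]]].
  exists alpha, m.
  split; [exact Hm |].
  exists GK, gL, u'.
  split; [exact HGK |].
  exists u.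
  split; [exact (eq_sym Eu) | exact Hpo].
Qed.

Lemma PBPOplus_step_SM (GL GR : C) :
  PBPOplus_step_of rho GL GR -> PBPO_step_SM rho GL GR.
Proof.
  intros [alpha [m [Hm [GK [gL [u' [HGK [u [Eu Hpo]]]]]]]]].
  assert (Eglu : alpha \o (gL \o u) = r_tL C rho \o r_l C rho).
  { destruct HGK as [EGK _].
    rewrite comp_assoc, EGK, <- comp_assoc, <- Eu.
    symmetry.
    apply r_commL. }
  exists m, alpha.
  split; [exact Hm |].
  split; [exact (pullback_idm_comm Hm) |].
  exists GK, gL, u'.
  split; [exact HGK |].
  exists u.
  split; [exact (pullback_idm_factor Hm Eglu) |].
  split; [exact (eq_sym Eu) | exact Hpo].
Qed.

Lemma PBPO_step_SM_iff_plus (GL GR : C) :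
  PBPO_step_SM rho GL GR <-> PBPOplus_step_of rho GL GR.
Proof.
  split; [apply PBPO_step_SM_plus | apply PBPOplus_step_SM].
Qed.

End Steps.

Theorem proposition1 (C : Category) (rho : PBPO_rule C) :
  monic_rule rho ->
  (forall GL GR : C, PBPO_step rho GL GR <-> PBPO_step_mono rho GL GR) /\
  (forall GL GR : C, PBPO_step_SM rho GL GR <-> PBPOplus_step_of rho GL GR).
Proof.
  intros [_ HtL].
  split; intros GL GR.
  - exact (PBPO_step_monoE C rho GL GR HtL).
  - exact (PBPO_step_SM_iff_plus C rho GL GR).
Qed.
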